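(* Let $\mathfrak{A}=(V,\mu)$ be a finite-dimensional anti-commutative algebra over a field $\mathbb{K}$ of characteristic zero, and suppose $\mathfrak{B}$ is a subalgebra of $\mathfrak{A}$ such that $V$ is the (vector space) direct sum of $\mathfrak{B}$ and the center $\mathcal{Z}(\mathfrak{A})$. Let $t\in\mathbb{K}$, $t\neq 0$. Then $\mathcal{D}(t,1,0)(\mathfrak{A})$ is a vector space isomorphic to $\mathcal{D}(t,1,0)(\mathfrak{B})\times L(\mathfrak{A}/\mathfrak{A}^{(2)};\mathcal{Z}(\mathfrak{A}))$.
   Context: An anti-commutative algebra is a vector space $V$ with a bilinear map $\mu$ satisfying $\mu(X,Y)=-\mu(Y,X)$. For $\alpha,\beta,\gamma\in\mathbb{K}$, an $(\alpha,\beta,\gamma)$-derivation of $(V,\mu)$ is a linear map $D:V\to V$ with $\alpha D\mu(X,Y)=\beta\mu(DX,Y)+\gamma\mu(X,DY)$ for all $X,Y$; their space is $\mathcal{D}(\alpha,\beta,\gamma)(V,\mu)$. The center is $\mathcal{Z}(\mathfrak{A})=\{X:\mu(X,Y)=0\ \forall Y\in V\}$; the derived algebra $\mathfrak{A}^{(2)}$ is the linear span of all products $\mu(X,Y)$. $L(U;W)$ denotes the space of linear maps from $U$ to $W$. *)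

From HB Require Import structures.
From mathcomp Require Import all_boot all_order all_algebra.
Set Implicit Arguments. Unset Strict Implicit. Unset Printing Implicit Defensive.
Import GRing.Theory.
Local Open Scope ring_scope.

Definition is_derivation (K : fieldType) (V : vectType K) (mu : V -> V -> V)
  (a b c : K) (D : 'End(V)) : Prop :=
  forall X Y : V, a *: D (mu X Y) = b *: mu (D X) Y + c *: mu X (D Y).

Definition central (K : fieldType) (V : vectType K) (mu : V -> V -> V) (X : V) : Prop :=
  forall Y : V, mu X Y = 0.

(* restriction of the product to a subspace B (meaningful when B is a subalgebra) *)
Definition restr_mul (K : fieldType) (V : vectType K) (mu : V -> V -> V)
  (B : {vspace V}) (x y : subvs_of B) : subvs_of B :=
  vsproj B (mu (vsval x) (vsval y)).

(* L(A/A^(2); Z(A)) realised (via the universal property of the quotient)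
   as the linear maps F : V -> V vanishing on all products mu X Y (hence on
   A^(2)) and with values in the center Z(A). *)
Definition quot_to_center (K : fieldType) (V : vectType K) (mu : V -> V -> V)
  (F : 'End(V)) : Prop :=
  (forall X Y : V, F (mu X Y) = 0) /\ (forall X : V, central mu (F X)).
Arguments restr_mul {K V} mu B x y.

From HB Require Import structures.
From mathcomp Require Import all_boot all_order all_algebra.
Set Implicit Arguments.
Unset Strict Implicit.
Unset Printing Implicit Defensive.

Import GRing.Theory.
Local Open Scope ring_scope.

(* Write V = B (+) Z, Z the center, with projections projB and projZ.  Central
   elements annihilate everything, so mu X Y = mu (projB X) (projB Y) lies in B.
   A (t,1,0)-derivation satisfies t D(mu X Y) = mu (D X) Y; hence it maps Z into
   Z and, as t != 0, products into B.  So D |-> (projB o D on B, projZ o D)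
   lands in D(t,1,0)(B) x L(A/A^(2); Z), and (E, F) |-> E o projB + F inverts
   it. *)

Section Center.

Variables (K : fieldType) (V : vectType K) (mu : V -> V -> V).

Definition ad (X : V) : 'End(V) := linfun (mu X).

Definition center : {vspace V} := lker (linfun ad).

Hypothesis mu_linearl : forall Y : V, linear (fun X => mu X Y).
Hypothesis mu_linearr : forall X : V, linear (mu X).

Let mu_bilinear : {bilinear V -> V -> V} :=
  HB.pack mu
    (bilinear_isBilinear.Build _ _ _ _ _ _ mu (mu_linearl, mu_linearr)).

Lemma muDl X1 X2 Y : mu (X1 + X2) Y = mu X1 Y + mu X2 Y.
Proof. exact: (linearDl mu_bilinear). Qed.

Lemma muDr X Y1 Y2 : mu X (Y1 + Y2) = mu X Y1 + mu X Y2.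
Proof. exact: (linearDr mu_bilinear). Qed.

Lemma adE X Y : ad X Y = mu X Y.
Proof. exact: (lfunE (mu_bilinear X)). Qed.

Lemma ad_linear : linear ad.
Proof.
move=> a X1 X2; apply/lfunP => Y.
by rewrite add_lfunE scale_lfunE !adE (mu_linearl Y).
Qed.

Let ad_lin : {linear V -> 'End(V)} :=
  HB.pack ad (GRing.isLinear.Build _ _ _ _ ad ad_linear).

Lemma memv_center z : reflect (central mu z) (z \in center).
Proof.
rewrite memv_ker (lfunE ad_lin) /=.
apply: (iffP eqP) => [adz0 Y | zc]; first by rewrite -adE adz0 zero_lfunE.
by apply/lfunP => Y; rewrite adE zero_lfunE.
Qed.

End Center.

Lemma derivation_t10P (K : fieldType) (V : vectType K) (mu : V -> V -> V) t D :
  is_derivation mu t 1 0 D <-> forall X Y, t *: D (mu X Y) = mu (D X) Y.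
Proof.
by split=> hD X Y; rewrite hD scale1r scale0r addr0.
Qed.

Lemma derivation_t10_central (K : fieldType) (V : vectType K) (mu : V -> V -> V)
    t D z :
  is_derivation mu t 1 0 D -> central mu z -> central mu (D z).
Proof. by move=> /derivation_t10P hD zc Y; rewrite -hD zc linear0 scaler0. Qed.

Section ComplementOfCenter.

Variables (K : fieldType) (V : vectType K) (mu : V -> V -> V).
Hypothesis mu_linearl : forall Y : V, linear (fun X => mu X Y).
Hypothesis mu_linearr : forall X : V, linear (mu X).
Hypothesis mu_anti : forall X Y : V, mu X Y = - mu Y X.
Variable B : {vspace V}.
Hypothesis B_spans :
  forall v : V, exists b z : V, [/\ b \in B, central mu z & v = b + z].
Hypothesis B_center_disjoint : forall v : V, v \in B -> central mu v -> v = 0.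

Local Notation Z := (center mu).
Local Notation memv_Z := (memv_center mu_linearl mu_linearr).

Definition projB : 'End(V) := daddv_pi B Z.
Definition projZ : 'End(V) := daddv_pi Z B.

Lemma capv_B_center : (B :&: Z = 0)%VS.
Proof.
apply/eqP; rewrite -subv0; apply/subvP => v /memv_capP[vB /memv_Z vZ].
by rewrite memv0 (B_center_disjoint vB vZ).
Qed.

Lemma projB_add_projZ v : projB v + projZ v = v.
Proof.
apply: daddv_pi_add; first exact: capv_B_center.
have [b [z [bB /memv_Z zZ ->]]] := B_spans v.
exact: memv_add.
Qed.

Lemma projB_mem v : projB v \in B. Proof. exact: memv_pi. Qed.

Lemma projZ_central v : central mu (projZ v). Proof. exact/memv_Z/memv_pi. Qed.

Lemma projB_id b : b \in B -> projB b = b.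
Proof. exact: daddv_pi_id capv_B_center. Qed.

Lemma projZ_id z : central mu z -> projZ z = z.
Proof. by move/memv_Z; apply: daddv_pi_id; rewrite capvC capv_B_center. Qed.

Lemma projB_central z : central mu z -> projB z = 0.
Proof.
by move=> zc; apply: (addIr z); rewrite -{3}(projB_add_projZ z) projZ_id ?add0r.
Qed.

Lemma projZ_mem b : b \in B -> projZ b = 0.
Proof.
by move=> bB; apply: (addrI b); rewrite -{1}(projB_id bB) projB_add_projZ addr0.
Qed.

Lemma mu_projB (X Y : V) : mu X Y = mu (projB X) (projB Y).
Proof.
rewrite -{1}(projB_add_projZ X) -{1}(projB_add_projZ Y) muDl // projZ_central.
by rewrite addr0 muDr // [mu _ (projZ Y)]mu_anti projZ_central oppr0 addr0.
Qed.

Hypothesis B_subalgebra : forall X Y : V, X \in B -> Y \in B -> mu X Y \in B.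

Lemma mu_memB X Y : mu X Y \in B.
Proof. by rewrite mu_projB B_subalgebra ?projB_mem. Qed.

Lemma restr_mul_projB X Y :
  restr_mul mu B (vsproj B (projB X)) (vsproj B (projB Y)) = vsproj B (mu X Y).
Proof. by rewrite /restr_mul !vsprojK ?projB_mem // -mu_projB. Qed.

Variable t : K.
Hypothesis t_neq0 : t != 0.

Lemma derivation_t10_memB D X Y : is_derivation mu t 1 0 D -> D (mu X Y) \in B.
Proof.
move=> /derivation_t10P hD.
by rewrite -[D _]scale1r -(mulVf t_neq0) -scalerA hD memvZ ?mu_memB.
Qed.

Definition split_der (D : 'End(V)) : 'End(subvs_of B) * 'End(V) :=
  ((linfun (vsproj B) \o projB \o D \o linfun vsval)%VF, (projZ \o D)%VF).

Definition glue_der (E : 'End(subvs_of B)) (F : 'End(V)) : 'End(V) :=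
  (linfun vsval \o E \o linfun (vsproj B) \o projB + F)%VF.

Lemma split_der1E D x : (split_der D).1 x = vsproj B (projB (D (vsval x))).
Proof. by rewrite !comp_lfunE !lfunE. Qed.

Lemma split_der2E D v : (split_der D).2 v = projZ (D v).
Proof. exact: comp_lfunE. Qed.

Lemma glue_derE E F v : glue_der E F v = vsval (E (vsproj B (projB v))) + F v.
Proof. by rewrite add_lfunE !comp_lfunE !lfunE. Qed.

Lemma split_der_linear : linear split_der.
Proof.
move=> a D1 D2; apply: injective_projections => /=; apply/lfunP => v;
  by rewrite !(comp_lfunE, add_lfunE, scale_lfunE) !linearP.
Qed.

Lemma split_der1_derivation D :
  is_derivation mu t 1 0 D ->
  is_derivation (restr_mul mu B) t 1 0 (split_der D).1.
Proof.
move=> hD; apply/derivation_t10P => x y.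
rewrite !split_der1E /restr_mul -linearZ /= vsprojK ?projB_mem ?mu_memB //.
rewrite projB_id ?(derivation_t10_memB _ _ hD) //.
move/derivation_t10P: hD => ->.
rewrite vsprojK ?projB_mem //.
by rewrite [in RHS]mu_projB projB_id ?projB_mem // -mu_projB.
Qed.

Lemma split_der2_quot_to_center D :
  is_derivation mu t 1 0 D -> quot_to_center mu (split_der D).2.
Proof.
move=> hD; split=> [X Y|X]; rewrite split_der2E; last exact: projZ_central.
by rewrite projZ_mem ?(derivation_t10_memB _ _ hD).
Qed.

Lemma glue_split_der D :
  is_derivation mu t 1 0 D -> glue_der (split_der D).1 (split_der D).2 = D.
Proof.
move=> hD; apply/lfunP => v.
have DprojZ_central : central mu (D (projZ v)).
  exact: derivation_t10_central hD (projZ_central v).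
rewrite glue_derE split_der1E split_der2E !vsprojK ?projB_mem //.
suff -> : projB (D (projB v)) = projB (D v) by rewrite projB_add_projZ.
rewrite -{2}(projB_add_projZ v) !linearD /=.
by rewrite (projB_central DprojZ_central) addr0.
Qed.

Lemma split_glue_der (E : 'End(subvs_of B)) (F : 'End(V)) :
  (forall X, central mu (F X)) -> split_der (glue_der E F) = (E, F).
Proof.
move=> Fc; apply: injective_projections; apply/lfunP => v; rewrite [RHS]/=.
  rewrite split_der1E glue_derE linearD /= (projB_central (Fc _)) addr0.
  by rewrite projB_id ?subvsP // vsvalK projB_id ?subvsP // vsvalK.
rewrite split_der2E glue_derE linearD /=.
by rewrite projZ_mem ?subvsP // projZ_id ?add0r.
Qed.

Lemma glue_der_derivation (E : 'End(subvs_of B)) (F : 'End(V)) :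
  is_derivation (restr_mul mu B) t 1 0 E -> quot_to_center mu F ->
  is_derivation mu t 1 0 (glue_der E F).
Proof.
move=> /derivation_t10P hE [F_mu0 Fc]; apply/derivation_t10P => X Y.
rewrite !glue_derE F_mu0 addr0 muDl // Fc addr0 projB_id ?mu_memB //.
rewrite -restr_mul_projB.
have /(congr1 vsval) := hE (vsproj B (projB X)) (vsproj B (projB Y)).
rewrite linearZ => ->.
rewrite /restr_mul !vsprojK ?mu_memB ?projB_mem //.
by rewrite [RHS]mu_projB (projB_id (subvsP _)).
Qed.

End ComplementOfCenter.

Theorem lemma2p6 (K : fieldType) (V : vectType K) (mu : V -> V -> V)
  (hchar : [pchar K] =i pred0)
  (hlinl : forall Y : V, linear (fun X => mu X Y))
  (hlinr : forall X : V, linear (mu X))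
  (hanti : forall X Y : V, mu X Y = - mu Y X)
  (B : {vspace V})
  (hsub : forall X Y : V, X \in B -> Y \in B -> mu X Y \in B)
  (hspan : forall v : V, exists b z : V, [/\ b \in B, central mu z & v = b + z])
  (hdisj : forall v : V, v \in B -> central mu v -> v = 0)
  (t : K) (ht : t != 0) :
  exists phi : 'End(V) -> 'End(subvs_of B) * 'End(V),
    [/\ linear phi,
        (forall D, is_derivation mu t 1 0 D ->
           is_derivation (restr_mul mu B) t 1 0 (phi D).1 /\
           quot_to_center mu (phi D).2),
        (forall D1 D2, is_derivation mu t 1 0 D1 -> is_derivation mu t 1 0 D2 ->
           phi D1 = phi D2 -> D1 = D2)
      & (forall E F, is_derivation (restr_mul mu B) t 1 0 E -> quot_to_center mu F ->
           exists D, is_derivation mu t 1 0 D /\ phi D = (E, F))].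
Proof.
exists (split_der mu B); split.
- exact: split_der_linear.
- move=> D hD; split; first exact: split_der1_derivation hD.
  exact: split_der2_quot_to_center hD.
- move=> D1 D2 hD1 hD2 eqD.
  have split_derK := glue_split_der hlinl hlinr hspan hdisj.
  by rewrite -(split_derK _ _ hD1) eqD (split_derK _ _ hD2).
- move=> E F hE hF; exists (glue_der mu E F); split.
    exact: glue_der_derivation.
  by apply: split_glue_der => //; case: hF.
Qed.
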